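(* Let $k\ge r\ge3$ and $m\ge0$ be integers, and let $\pi\in\mathbb{C}_{<}(k,r|p,t)$ for some integers $p,t\ge0$ with $p+t=m$. Then there do not exist integers $p',t'\ge0$ with $p'\ne p$, $t'\ne t$, $p'+t'=m$ and $\pi\in\mathbb{C}_{<}(k,r|p',t')$.
   Context: A partition $\pi=(\pi_1,\dots,\pi_\ell)$ is a finite non-increasing sequence of positive integers; ''$a$ occurs in $\pi$'' means $a=\pi_i$ for some $i$. Göllnitz–Gordon marking: $GG(\pi)$ assigns a positive integer (mark) to each part, processing the parts from smallest to largest; $\pi_i$ receives the smallest positive integer different from the marks of all parts $\pi_g$ with $g>i$ and $\pi_i-\pi_g\le 2$, where $\pi_i-\pi_g<2$ is required when $\pi_i$ is odd. An ''$r$-marked part $a$'' is a part equal to $a$ with mark $r$. $N_i(\pi)$ is the number of parts with mark $i$; $\pi^{(i)}_1\ge\dots\ge\pi^{(i)}_{N_i(\pi)}$ are the parts with mark $i$, with $\pi^{(i)}_0=+\infty$, $\pi^{(i)}_{N_i(\pi)+1}=-\infty$. $\mathbb{C}(k,r)$: partitions with (i) no odd part repeated; (ii) $\pi_i\ge\pi_{i+k-1}+2$ for $1\le i\le\ell-k+1$, strict if $\pi_i$ even; (iii) at most $r-1$ parts $\le 2$. Starting types: for $\pi\in\mathbb{C}(k,r)$ with $N_2=N_2(\pi)\ge1$, let $l$ be the largest integer in $\{0,\dots,N_2\}$ such that no odd part of $\pi$ is $\ge\pi^{(2)}_l$; for $l<i\le N_2$, $\pi^{(2)}_i$ has type $s_{-1}$.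 For $b=1,\dots,l$ in increasing order, type and auxiliary $\sigma_b$: for $b=1$: Case 1: 1-marked part $\pi^{(2)}_1-1$ exists and $\pi^{(2)}_1+2$ does not occur: type $s_0$, $\sigma_1=\pi^{(2)}_1-1$; Case 2: 1-marked $\pi^{(2)}_1-2$ exists and $\pi^{(2)}_1+2$ does not occur: type $s_1$, $\sigma_1=\pi^{(2)}_1-2$; Case 3: 1-marked $\pi^{(2)}_1+2$ exists: type $s_2$, $\sigma_1=\pi^{(2)}_1+2$; Case 4: 1-marked $\pi^{(2)}_1$ exists: type $s_3$, $\sigma_1=\pi^{(2)}_1$. For $2\le b\le l$: Case 1: 1-marked $\pi^{(2)}_b-1$ exists and, if a 1-marked $\pi^{(2)}_b+2$ exists, $\sigma_{b-1}=\pi^{(2)}_b+2$: type $s_0$, $\sigma_b=\pi^{(2)}_b-1$; Case 2: same with $\pi^{(2)}_b-2$: type $s_1$, $\sigma_b=\pi^{(2)}_b-2$; Case 3: 1-marked $\pi^{(2)}_b+2$ exists and $\sigma_{b-1}\ne\pi^{(2)}_b+2$: type $s_2$, $\sigma_b=\pi^{(2)}_b+2$; Case 4: 1-marked $\pi^{(2)}_b$ exists: type $s_3$, $\sigma_b=\pi^{(2)}_b$. $\mathbb{C}_{<}(k,r|p,t)$: the set of $\pi\in\mathbb{C}(k,r)$ such that (1) no odd part is $\ge 2t+1$; (2) $\pi^{(2)}_{p+1}<2t+1<\pi^{(2)}_p$ (in particular $p\le N_2(\pi)$); (3) if $\pi^{(2)}_p=2t+2$ then it is of starting type $s_2$ or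 $s_3$; (4) if $\pi^{(2)}_{p+1}=2t$ then it is of starting type $s_0$ or $s_1$. *)

From mathcomp Require Import all_boot.
Set Implicit Arguments. Unset Strict Implicit. Unset Printing Implicit Defensive.

(* A partition pi = (pi_1,...,pi_l) is a seq nat, pi_i = nth 0 s (i-1). *)
Definition is_partition (s : seq nat) : bool :=
  sorted geq s && all (fun x => 0 < x) s.

Definition mex1 (l : seq nat) : nat :=
  head 0 [seq n <- iota 1 (size l).+1 | n \notin l].

(* the part a (processed later, larger) conflicts with an earlier processed part b
   (b = pi_g, g > i, so b <= a) *)
Definition gg_conflict (a b : nat) : bool :=
  (a - b <= 2) && (odd a ==> (a - b < 2)).

Fixpoint gg_aux (prev : seq (nat * nat)) (inc : seq nat) : seq (nat * nat) :=
  match inc with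
  | [::] => prev
  | a :: t =>
      let m := mex1 [seq q.2 | q <- prev & gg_conflict a q.1] in
      gg_aux ((a, m) :: prev) t
  end.

(* GG(pi): list of (part, mark), aligned with pi (i-th entry = (pi_i, mark of pi_i)) *)
Definition GG (s : seq nat) : seq (nat * nat) := gg_aux [::] (rev s).

(* parts with mark i, in non-increasing order: pi^(i)_1 >= ... *)
Definition marked_parts (s : seq nat) (i : nat) : seq nat :=
  [seq q.1 | q <- GG s & q.2 == i].

Definition N_ (s : seq nat) (i : nat) : nat := size (marked_parts s i).

(* pi^(i)_j for 1 <= j <= N_i *)
Definition pim (s : seq nat) (i j : nat) : nat := nth 0 (marked_parts s i) j.-1.

Definition has_marked (s : seq nat) (r a : nat) : bool := (a, r) \in GG s.

Definition in_C (k r : nat) (s : seq nat) : Prop :=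
  is_partition s /\
  (forall a, odd a -> count_mem a s <= 1) /\
  (forall i, i + k.-1 < size s ->
     if odd (nth 0 s i) then nth 0 s (i + k.-1) + 2 <= nth 0 s i
     else nth 0 s (i + k.-1) + 2 < nth 0 s i) /\
  count (fun x => x <= 2) s <= r.-1.

Inductive stype := s_m1 | s_0 | s_1 | s_2 | s_3.

(* l: the largest j in {0..N_2} such that no odd part is >= pi^(2)_j
   (pi^(2)_0 = +infinity) *)
Definition no_odd_ge (s : seq nat) (j : nat) : bool :=
  (j == 0) || all (fun x => ~~ odd x || (x < pim s 2 j)) s.

Definition l_index (s : seq nat) : nat :=
  \max_(0 <= j < (N_ s 2).+1 | no_odd_ge s j) j.

(* type and auxiliary sigma_b for 1 <= b (<= l); None when no case applies *)
Fixpoint stsig (s : seq nat) (b : nat) : option (stype * nat) :=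
  match b with
  | 0 => None
  | b'.+1 =>
    let a := pim s 2 b in
    if b' == 0 then
      if has_marked s 1 (a - 1) && (a + 2 \notin s) then Some (s_0, a - 1)
      else if has_marked s 1 (a - 2) && (a + 2 \notin s) then Some (s_1, a - 2)
      else if has_marked s 1 (a + 2) then Some (s_2, a + 2)
      else if has_marked s 1 a then Some (s_3, a)
      else None
    else
      let osig := omap snd (stsig s b') in
      let side := has_marked s 1 (a + 2) ==> (osig == Some (a + 2)) in
      if has_marked s 1 (a - 1) && side then Some (s_0, a - 1)
      else if has_marked s 1 (a - 2) && side then Some (s_1, a - 2)
      else if has_marked s 1 (a + 2) && (osig != Some (a + 2)) then Some (s_2, a + 2)
      else if has_marked s 1 a then Some (s_3, a)
      else None
  end.

Definition start_type (s : seq nat) (i : nat) : option stype :=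
  if l_index s < i then Some s_m1 else omap fst (stsig s i).

Definition in_Cless (k r p t : nat) (s : seq nat) : Prop :=
  in_C k r s /\
  (forall x, x \in s -> odd x -> x < 2 * t + 1) /\
  (p <= N_ s 2 /\
   (p < N_ s 2 -> pim s 2 p.+1 < 2 * t + 1) /\
   (0 < p -> 2 * t + 1 < pim s 2 p)) /\
  (0 < p -> pim s 2 p = 2 * t + 2 ->
     start_type s p = Some s_2 \/ start_type s p = Some s_3) /\
  (p < N_ s 2 -> pim s 2 p.+1 = 2 * t ->
     start_type s p.+1 = Some s_0 \/ start_type s p.+1 = Some s_1).

From mathcomp Require Import all_boot.
From mathcomp Require Import zify.

Set Implicit Arguments.
Unset Strict Implicit.
Unset Printing Implicit Defensive.

(* Parts carrying the same Göllnitz–Gordon mark never conflict, so the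
   2-marked parts decrease by at least 2 at each step, and by at least 3 below
   an even part.  If pi were in C_<(k,r|p,t) and in C_<(k,r|p',t') with p < p'
   and p + t = p' + t', then
     2t'+1 < pi^(2)_p' <= pi^(2)_(p+1) - 2(p'-p-1) <= 2t - 2(p'-p-1) = 2t'+2,
   so every inequality is tight: pi^(2)_(p+1) = 2t is even, which rules out
   p' >= p+2, and for p' = p+1 the part 2t = 2t'+2 would have starting type
   both s_2/s_3 and s_0/s_1. *)

Lemma mex1_notin (l : seq nat) : mex1 l \notin l.
Proof.
rewrite /mex1; set fresh := [seq n <- _ | _].
case Efresh: fresh => [|x xs] /=.
- have sub_l : {subset iota 1 (size l).+1 <= l}.
    move=> y y_iota; apply: contraT => y_l.
    have : y \in fresh by rewrite mem_filter y_l y_iota.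
    by rewrite Efresh.
  by have := uniq_leq_size (iota_uniq 1 (size l).+1) sub_l; rewrite size_iota ltnn.
- have : x \in fresh by rewrite Efresh mem_head.
  by rewrite mem_filter => /andP[].
Qed.

Definition mark_compatible (x y : nat * nat) : bool :=
  (x.2 == y.2) ==> ~~ gg_conflict x.1 y.1.

Lemma gg_aux_parts (prev : seq (nat * nat)) (inc : seq nat) :
  map fst (gg_aux prev inc) = catrev inc (map fst prev).
Proof. by elim: inc prev => [|a inc IH] prev //=; rewrite IH. Qed.

Lemma GG_parts (s : seq nat) : map fst (GG s) = s.
Proof. by rewrite /GG gg_aux_parts catrevE cats0 revK. Qed.

Lemma gg_aux_mark_compatible (prev : seq (nat * nat)) (inc : seq nat) :
  pairwise mark_compatible prev -> pairwise mark_compatible (gg_aux prev inc).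
Proof.
elim: inc prev => [|a inc IH] prev //= compat_prev; apply: IH.
rewrite pairwise_cons compat_prev andbT; apply/allP => y y_prev.
apply/implyP => /= /eqP mark_eq; apply/negP => conflict_ay.
have := mex1_notin [seq q.2 | q <- prev & gg_conflict a q.1].
by rewrite mark_eq => /negP; apply; apply/mapP; exists y; rewrite ?mem_filter ?conflict_ay.
Qed.

Lemma GG_mark_compatible (s : seq nat) : pairwise mark_compatible (GG s).
Proof. exact: gg_aux_mark_compatible. Qed.

Lemma marked_parts_pairwise (s : seq nat) (i : nat) : is_partition s ->
  pairwise (fun a b => (b <= a) && ~~ gg_conflict a b) (marked_parts s i).
Proof.
case/andP=> sorted_s _.
have geq_GG : pairwise (relpre fst geq) (GG s).
  rewrite -pairwise_map GG_parts -sorted_pairwise //.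
  by move=> a b c /= ba cb; apply: leq_trans cb ba.
rewrite /marked_parts pairwise_map.
apply: (@sub_in_pairwise _ (fun q => q.2 == i)
  [rel x y | mark_compatible x y && relpre fst geq x y]); last first.
- by apply: pairwise_filter; rewrite pairwise_relI GG_mark_compatible geq_GG.
- exact: filter_all.
move=> x y /eqP x_i /eqP y_i /= /andP[compat ->].
by move: compat; rewrite /mark_compatible x_i y_i eqxx.
Qed.

Lemma no_conflict_gap (a b : nat) : b <= a -> ~~ gg_conflict a b ->
  b + 2 <= a /\ (~~ odd a -> b + 3 <= a).
Proof. by rewrite /gg_conflict; case: (odd a) => /=; lia. Qed.

Lemma pim_succ_gap (s : seq nat) (i j : nat) :
  is_partition s -> 0 < j -> j < N_ s i ->
  pim s i j.+1 + 2 <= pim s i j /\ (~~ odd (pim s i j) -> pim s i j.+1 + 3 <= pim s i j).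
Proof.
move=> part_s j_gt0 j_lt; rewrite /N_ in j_lt.
have /(pairwiseP 0) marked_pw := marked_parts_pairwise i part_s.
have /andP[] : (pim s i j.+1 <= pim s i j) && ~~ gg_conflict (pim s i j) (pim s i j.+1).
  by apply: marked_pw; rewrite ?inE /=; lia.
exact: no_conflict_gap.
Qed.

Lemma pim_chain (s : seq nat) (i j n : nat) :
  is_partition s -> 0 < j -> j + n <= N_ s i -> pim s i (j + n) + 2 * n <= pim s i j.
Proof.
move=> part_s j_gt0; elim: n => [|n IH]; first by rewrite addn0 muln0 addn0.
rewrite addnS => jn_lt.
have [gap _] := pim_succ_gap part_s (ltn_addr n j_gt0) jn_lt.
have := IH (ltnW jn_lt); lia.
Qed.

Lemma pim_window (s : seq nat) (i p p' t t' : nat) :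
  is_partition s -> p < p' -> p' <= N_ s i -> p + t = p' + t' ->
  pim s i p.+1 < 2 * t + 1 -> 2 * t' + 1 < pim s i p' ->
  p' = p.+1 /\ pim s i p' = 2 * t' + 2.
Proof.
move=> part_s lt_pp' p'_le sum_eq hi lo.
case: (ltngtP p' p.+1) => [|far|p'E]; [lia | | by subst p'; lia].
have [gap even_gap] := pim_succ_gap part_s (ltn0Sn p) (leq_trans far p'_le).
have := @pim_chain s i p.+2 (p' - p.+2) part_s isT; rewrite subnKC // => chain.
have pim_eq : pim s i p.+1 = 2 * t by have := chain p'_le; lia.
by move: even_gap; rewrite pim_eq oddM /=; lia.
Qed.

Lemma in_Cless_shift_absurd (k r p t p' t' : nat) (s : seq nat) :
  p < p' -> p + t = p' + t' ->
  in_Cless k r p t s -> in_Cless k r p' t' s -> False.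
Proof.
move=> lt_pp' sum_eq [[part_s _] [_ [[_ [hi _]] [_ type_lo]]]]
  [_ [_ [[p'_le [_ lo]] [type_hi _]]]].
have p_lt : p < N_ s 2 by apply: leq_trans p'_le.
have p'_gt0 : 0 < p' by apply: leq_ltn_trans lt_pp'.
have [p'E pim_p'] := pim_window part_s lt_pp' p'_le sum_eq (hi p_lt) (lo p'_gt0).
subst p'.
have pim_p : pim s 2 p.+1 = 2 * t by lia.
have := type_lo p_lt pim_p.
by case: (type_hi isT pim_p') => -> [].
Qed.

Theorem proposition5p2 (k r m p t : nat) (s : seq nat) :
  3 <= r -> r <= k -> p + t = m -> in_Cless k r p t s ->
  ~ (exists p' t' : nat,
       p' <> p /\ t' <> t /\ p' + t' = m /\ in_Cless k r p' t' s).
Proof.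
move=> _ _ sum_m C_pt [p' [t' [p'_ne [_ [sum_m' C_p't']]]]].
case: (ltngtP p p') => [lt_pp'|lt_p'p|eq_pp']; last exact: p'_ne (esym eq_pp').
- by apply: (in_Cless_shift_absurd lt_pp' _ C_pt C_p't'); rewrite sum_m.
- by apply: (in_Cless_shift_absurd lt_p'p _ C_p't' C_pt); rewrite sum_m.
Qed.
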